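(* Let $N$ be an nfa with $n$ states accepting the language $L$, and suppose $L$ has exactly $2^n$ distinct left derivatives. Then $\mathrm{LQ}(L)$ is a boolean algebra, and $\mathrm{ns}(L)=\mathrm{nsyn}(L)=n$.
   Context: Left derivatives: $u^{-1}L=\{w:uw\in L\}$. $\mathrm{LQ}(L)$ is the set of finite unions (including $\emptyset$) of left derivatives, ordered by inclusion. An nfa has finitely many states, transition relations, and sets of initial and final states (several initial states allowed). $\mathrm{ns}(L)$ is the least number of states of an nfa accepting $L$; $\mathrm{nsyn}(L)$ is the least number of states of an nfa for $L$ all of whose states accept languages in the boolean algebra generated by the two-sided derivatives $u^{-1}Lv^{-1}=\{w:uwv\in L\}$. *)

From mathcomp Require Import all_boot.
Set Implicit Arguments. Unset Strict Implicit. Unset Printing Implicit Defensive.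

Definition lang (A : Type) := seq A -> Prop.

Definition subl A (K K' : lang A) := forall w, K w -> K' w.
Definition eql A (K K' : lang A) := forall w, K w <-> K' w.

Definition lderiv A (u : seq A) (L : lang A) : lang A := fun w => L (u ++ w).
Definition tderiv A (u v : seq A) (L : lang A) : lang A := fun w => L (u ++ w ++ v).

Definition num_lderivs A (L : lang A) (k : nat) : Prop :=
  exists us : seq (seq A),
    size us = k /\
    (forall i j, i < k -> j < k -> i <> j ->
       ~ eql (lderiv (nth [::] us i) L) (lderiv (nth [::] us j) L)) /\
    (forall u, exists2 i, i < k & eql (lderiv u L) (lderiv (nth [::] us i) L)).

(* LQ(L): finite unions (including the empty union) of left derivatives. *)
Definition LQ A (L : lang A) (K : lang A) : Prop :=
  exists s : seq (seq A),
    eql K (fun w => exists2 i, i < size s & L (nth [::] s i ++ w)).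

(* Joins and meets are
   taken inside P (least upper / greatest lower bounds in P). *)
Definition is_lub A (P : lang A -> Prop) (x y z : lang A) :=
  P z /\ subl x z /\ subl y z /\
  forall t, P t -> subl x t -> subl y t -> subl z t.
Definition is_glb A (P : lang A -> Prop) (x y z : lang A) :=
  P z /\ subl z x /\ subl z y /\
  forall t, P t -> subl t x -> subl t y -> subl t z.
Definition is_bot A (P : lang A -> Prop) (b : lang A) :=
  P b /\ forall t, P t -> subl b t.
Definition is_top A (P : lang A -> Prop) (b : lang A) :=
  P b /\ forall t, P t -> subl t b.

Definition boolean_algebra A (P : lang A -> Prop) : Prop :=
  (exists b, is_bot P b) /\ (exists t, is_top P t) /\
  (forall x y, P x -> P y -> exists z, is_lub P x y z) /\
  (forall x y, P x -> P y -> exists z, is_glb P x y z) /\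
  (* distributivity: x /\ (y \/ z) = (x /\ y) \/ (x /\ z) *)
  (forall x y z j a m1 m2 b, P x -> P y -> P z ->
     is_lub P y z j -> is_glb P x j a ->
     is_glb P x y m1 -> is_glb P x z m2 -> is_lub P m1 m2 b -> eql a b) /\
  (forall x, P x -> exists2 c, P c &
     (forall m, is_glb P x c m -> is_bot P m) /\
     (forall j, is_lub P x c j -> is_top P j)).

Record nfa (A : finType) (n : nat) := Nfa {
  nfa_init : {set 'I_n};
  nfa_final : {set 'I_n};
  nfa_trans : 'I_n -> A -> {set 'I_n}
}.

Fixpoint nfa_reach (A : finType) n (N : nfa A n) (S : {set 'I_n}) (w : seq A)
  : {set 'I_n} :=
  match w with
  | [::] => S
  | a :: w' => nfa_reach N (\bigcup_(q in S) nfa_trans N q a) w'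
  end.

Definition nfa_lang (A : finType) n (N : nfa A n) : lang A :=
  fun w => nfa_reach N (nfa_init N) w :&: nfa_final N != set0.

Definition state_lang (A : finType) n (N : nfa A n) (q : 'I_n) : lang A :=
  fun w => nfa_reach N [set q] w :&: nfa_final N != set0.

Definition accepts_lang (A : finType) n (N : nfa A n) (L : lang A) :=
  eql (nfa_lang N) L.

Definition is_ns (A : finType) (L : lang A) (k : nat) : Prop :=
  (exists N : nfa A k, accepts_lang N L) /\
  (forall m (M : nfa A m), accepts_lang M L -> k <= m).

Inductive in_gen_BA (A : Type) (G : lang A -> Prop) : lang A -> Prop :=
  | gba_gen K : G K -> in_gen_BA G K
  | gba_empty : in_gen_BA G (fun _ => False)
  | gba_compl K : in_gen_BA G K -> in_gen_BA G (fun w => ~ K w)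
  | gba_union K K' : in_gen_BA G K -> in_gen_BA G K' ->
      in_gen_BA G (fun w => K w \/ K' w)
  | gba_ext K K' : in_gen_BA G K -> eql K K' -> in_gen_BA G K'.

Definition two_sided_derivs A (L : lang A) (K : lang A) : Prop :=
  exists u v, eql K (tderiv u v L).

Definition syn_nfa (A : finType) n (N : nfa A n) (L : lang A) : Prop :=
  forall q : 'I_n, in_gen_BA (two_sided_derivs L) (state_lang N q).

Definition is_nsyn (A : finType) (L : lang A) (k : nat) : Prop :=
  (exists N : nfa A k, accepts_lang N L /\ syn_nfa N L) /\
  (forall m (M : nfa A m), accepts_lang M L -> syn_nfa M L -> k <= m).

From mathcomp Require Import all_boot.
Set Implicit Arguments. Unset Strict Implicit. Unset Printing Implicit Defensive.

(* The left derivative u^{-1}L is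
   the language accepted by N from the set of states reached on reading u, so
   u |-> (reached set) determines the derivative.  Consequently any m-state
   nfa accepting L gives at most 2^m derivatives; this yields ns(L) >= n when
   L has 2^n derivatives.  For N itself the map from the 2^n derivatives to
   the 2^n subsets of states is then a bijection: every subset is reachable
   and distinct subsets accept distinct languages.  Hence S |-> accept_from S
   is an order isomorphism from the powerset lattice onto LQ(L), which is
   therefore a boolean algebra (proved abstractly for any family of languages
   order-isomorphic to a finite powerset).  Finally each single state q is
   reached by some word u, so q accepts u^{-1}L, a two-sided derivative; thus
   N is an nfa witnessing nsyn(L) = n as well. *)

Lemma eqlxx (A : Type) (K : lang A) : eql K K.
Proof. by []. Qed.

Lemma eql_trans (A : Type) (K1 K2 K3 : lang A) :
  eql K1 K2 -> eql K2 K3 -> eql K1 K3.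
Proof. by move=> h12 h23 w; apply: iff_trans (h12 w) (h23 w). Qed.

Lemma eql_sym (A : Type) (K1 K2 : lang A) : eql K1 K2 -> eql K2 K1.
Proof. by move=> h w; apply: iff_sym. Qed.

Lemma lub_unique (A : Type) (P : lang A -> Prop) (x y z z' : lang A) :
  is_lub P x y z -> is_lub P x y z' -> eql z z'.
Proof.
move=> [Pz [xz [yz min_z]]] [Pz' [xz' [yz' min_z']]] w.
by split; [apply: min_z | apply: min_z'].
Qed.

Lemma glb_unique (A : Type) (P : lang A -> Prop) (x y z z' : lang A) :
  is_glb P x y z -> is_glb P x y z' -> eql z z'.
Proof.
move=> [Pz [zx [zy max_z]]] [Pz' [zx' [zy' max_z']]] w.
by split; [apply: max_z' | apply: max_z].
Qed.

(* A family P of languages that is, up to extensional equality, the image of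
   the powerset of a finite type under an order embedding f is a boolean
   algebra: joins, meets, bottom, top and complements are the images of union,
   intersection, the empty set, the full set and complement. *)
Section PowersetImage.

Variables (A : Type) (T : finType) (P : lang A -> Prop) (f : {set T} -> lang A).
Hypothesis P_image : forall K, P K <-> exists S, eql K (f S).
Hypothesis f_order : forall S S', subl (f S) (f S') <-> S \subset S'.

Lemma P_f (S : {set T}) : P (f S).
Proof. by apply/P_image; exists S. Qed.

Lemma repr_subl (K K' : lang A) (S S' : {set T}) :
  eql K (f S) -> eql K' (f S') -> (subl K K' <-> S \subset S').
Proof.
move=> hK hK'; split=> [sub | /f_order sub w /hK/sub/hK' //].
by apply/f_order => w /hK/sub/hK'.
Qed.

Lemma lub_image (x y : lang A) (X Y : {set T}) :
  eql x (f X) -> eql y (f Y) -> is_lub P x y (f (X :|: Y)).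
Proof.
move=> hx hy; split; first exact: P_f.
split; first by apply/(repr_subl hx (eqlxx _)); apply: subsetUl.
split; first by apply/(repr_subl hy (eqlxx _)); apply: subsetUr.
move=> t /P_image[S ht] xt yt; apply/(repr_subl (eqlxx _) ht).
by rewrite subUset (repr_subl hx ht).1 // (repr_subl hy ht).1.
Qed.

Lemma glb_image (x y : lang A) (X Y : {set T}) :
  eql x (f X) -> eql y (f Y) -> is_glb P x y (f (X :&: Y)).
Proof.
move=> hx hy; split; first exact: P_f.
split; first by apply/(repr_subl (eqlxx _) hx); apply: subsetIl.
split; first by apply/(repr_subl (eqlxx _) hy); apply: subsetIr.
move=> t /P_image[S ht] tx ty; apply/(repr_subl ht (eqlxx _)).
by rewrite subsetI (repr_subl ht hx).1 // (repr_subl ht hy).1.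
Qed.

Lemma lub_repr (x y z : lang A) (X Y : {set T}) :
  eql x (f X) -> eql y (f Y) -> is_lub P x y z -> eql z (f (X :|: Y)).
Proof. by move=> hx hy hz; apply: lub_unique hz (lub_image hx hy). Qed.

Lemma glb_repr (x y z : lang A) (X Y : {set T}) :
  eql x (f X) -> eql y (f Y) -> is_glb P x y z -> eql z (f (X :&: Y)).
Proof. by move=> hx hy hz; apply: glb_unique hz (glb_image hx hy). Qed.

Lemma bot_image (b : lang A) : eql b (f set0) -> is_bot P b.
Proof.
move=> hb; split; first by apply/P_image; exists set0.
by move=> t /P_image[S ht]; apply/(repr_subl hb ht); apply: sub0set.
Qed.

Lemma top_image (b : lang A) : eql b (f setT) -> is_top P b.
Proof.
move=> hb; split; first by apply/P_image; exists setT.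
by move=> t /P_image[S ht]; apply/(repr_subl ht hb); apply: subsetT.
Qed.

Theorem powerset_image_boolean_algebra : boolean_algebra P.
Proof.
split; first by exists (f set0); apply: bot_image.
split; first by exists (f setT); apply: top_image.
split.
  move=> x y /P_image[X hx] /P_image[Y hy].
  by exists (f (X :|: Y)); apply: lub_image.
split.
  move=> x y /P_image[X hx] /P_image[Y hy].
  by exists (f (X :&: Y)); apply: glb_image.
split.
  move=> x y z j a m1 m2 b /P_image[X hx] /P_image[Y hy] /P_image[Z hz]
    hj ha hm1 hm2 hb.
  have ha' := glb_repr hx (lub_repr hy hz hj) ha.
  have hb' := lub_repr (glb_repr hx hy hm1) (glb_repr hx hz hm2) hb.
  by rewrite setIUr in ha'; apply: eql_trans ha' (eql_sym hb').
move=> x /P_image[X hx]; exists (f (~: X)); first exact: P_f.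
split=> [m hm | j hj].
  by apply: bot_image; rewrite -(setICr X); apply: glb_repr hx (eqlxx _) hm.
by apply: top_image; rewrite -(setUCr X); apply: lub_repr hx (eqlxx _) hj.
Qed.

End PowersetImage.

Section AcceptFrom.

Variables (A : finType) (n : nat) (N : nfa A n).

Definition accept_from (S : {set 'I_n}) : lang A :=
  fun w => nfa_reach N S w :&: nfa_final N != set0.

Lemma nfa_lang_accept_from : nfa_lang N = accept_from (nfa_init N).
Proof. by []. Qed.

Lemma reach_cat (S : {set 'I_n}) (u w : seq A) :
  nfa_reach N S (u ++ w) = nfa_reach N (nfa_reach N S u) w.
Proof. by elim: u S => //= a u IH S; rewrite IH. Qed.

Lemma accept_from_cat (S : {set 'I_n}) (u w : seq A) :
  accept_from S (u ++ w) = accept_from (nfa_reach N S u) w.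
Proof. by rewrite /accept_from reach_cat. Qed.

Lemma mem_reach (S : {set 'I_n}) (w : seq A) (x : 'I_n) :
  (x \in nfa_reach N S w) = [exists q in S, x \in nfa_reach N [set q] w].
Proof.
elim: w S => [|a w IH] S /=.
  apply/idP/existsP => [xS | [q /andP[qS]]]; last by rewrite in_set1 => /eqP->.
  by exists x; rewrite xS in_set1 eqxx.
rewrite IH; apply/existsP/existsP.
  move=> [p /andP[/bigcupP[q qS pq] xp]]; exists q; rewrite qS /= IH big_set1.
  by apply/existsP; exists p; rewrite pq.
move=> [q /andP[qS]]; rewrite IH big_set1 => /existsP[p /andP[pq xp]].
by exists p; rewrite xp andbT; apply/bigcupP; exists q.
Qed.

Lemma accept_fromE (S : {set 'I_n}) (w : seq A) :
  accept_from S w <-> exists2 q, q \in S & state_lang N q w.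
Proof.
split.
  move=> /set0Pn[x /setIP[]]; rewrite mem_reach => /exists_inP[q qS xq] xF.
  by exists q => //; apply/set0Pn; exists x; rewrite inE xq.
move=> [q qS /set0Pn[x /setIP[xq xF]]]; apply/set0Pn; exists x.
by rewrite inE xF andbT mem_reach; apply/exists_inP; exists q.
Qed.

Lemma accept_from_setU (S S' : {set 'I_n}) (w : seq A) :
  accept_from (S :|: S') w <-> accept_from S w \/ accept_from S' w.
Proof.
split.
  move=> /accept_fromE[q /setUP[qS | qS'] hq]; [left | right];
    by apply/accept_fromE; exists q.
move=> [/accept_fromE[q qS hq] | /accept_fromE[q qS hq]];
  by apply/accept_fromE; exists q; rewrite // inE qS ?orbT.
Qed.

Lemma accept_from_mono (S S' : {set 'I_n}) :
  S \subset S' -> subl (accept_from S) (accept_from S').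
Proof.
by move=> /setUidPr <- w h; apply/accept_from_setU; left.
Qed.

Lemma lderiv_accepted (L : lang A) (u : seq A) :
  accepts_lang N L -> eql (lderiv u L) (accept_from (nfa_reach N (nfa_init N) u)).
Proof. by move=> hN w; rewrite -accept_from_cat; apply: iff_sym (hN _). Qed.

Lemma lderiv_union_accepted (s : seq (seq A)) :
  eql (fun w => exists2 i, i < size s & nfa_lang N (nth [::] s i ++ w))
      (accept_from (\bigcup_(i < size s) nfa_reach N (nfa_init N) (nth [::] s i))).
Proof.
move=> w; split.
  move=> [i ilt]; rewrite nfa_lang_accept_from accept_from_cat.
  move=> /accept_fromE[q qi hq].
  by apply/accept_fromE; exists q => //; apply/bigcupP; exists (Ordinal ilt).
move=> /accept_fromE[q /bigcupP[i _ qi] hq]; exists i => //.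
by rewrite nfa_lang_accept_from accept_from_cat; apply/accept_fromE; exists q.
Qed.

End AcceptFrom.

Lemma card_finset (T : finType) : #|{set T}| = 2 ^ #|T|.
Proof. by rewrite -(cardsT T) -card_powerset powersetT cardsT. Qed.

(* Distinct left derivatives must be reached in distinct state sets of any
   nfa M accepting L: languages accepted from the reached sets separate them. *)
Section DerivativesSeparate.

Variables (A : finType) (L : lang A) (k : nat) (us : seq (seq A)).
Hypothesis us_distinct : forall i j, i < k -> j < k -> i <> j ->
  ~ eql (lderiv (nth [::] us i) L) (lderiv (nth [::] us j) L).
Variables (m : nat) (M : nfa A m).
Hypothesis M_accepts : accepts_lang M L.

Definition reached (i : 'I_k) : {set 'I_m} :=
  nfa_reach M (nfa_init M) (nth [::] us i).

Lemma reached_separate (i j : 'I_k) :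
  eql (accept_from M (reached i)) (accept_from M (reached j)) -> i = j.
Proof.
move=> eq_ij; apply/val_inj/eqP/negPn/negP => /eqP ne.
apply: (us_distinct (ltn_ord i) (ltn_ord j) ne).
apply: eql_trans (lderiv_accepted _ M_accepts) _.
exact: eql_trans eq_ij (eql_sym (lderiv_accepted _ M_accepts)).
Qed.

Lemma reached_inj : injective reached.
Proof. by move=> i j e; apply: reached_separate; rewrite e. Qed.

End DerivativesSeparate.

Lemma num_lderivs_le (A : finType) (L : lang A) (k m : nat) (M : nfa A m) :
  accepts_lang M L -> num_lderivs L k -> k <= 2 ^ m.
Proof.
move=> hM [us [_ [hdist _]]].
have := leq_card _ (reached_inj hdist hM).
by rewrite card_ord card_finset card_ord.
Qed.

Lemma states_lower_bound (A : finType) (L : lang A) (n m : nat) (M : nfa A m) :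
  num_lderivs L (2 ^ n) -> accepts_lang M L -> n <= m.
Proof. by move=> hL hM; rewrite -(@leq_exp2l 2) // (num_lderivs_le hM hL). Qed.

Section MaximalNfa.

Variables (A : finType) (n : nat) (N : nfa A n) (us : seq (seq A)).
Hypothesis us_distinct : forall i j, i < 2 ^ n -> j < 2 ^ n -> i <> j ->
  ~ eql (lderiv (nth [::] us i) (nfa_lang N)) (lderiv (nth [::] us j) (nfa_lang N)).

Let reachedN : 'I_(2 ^ n) -> {set 'I_n} := reached us N.

Lemma reached_onto (S : {set 'I_n}) : exists i, S = reachedN i.
Proof.
have /codomP[i ->] : S \in codom reachedN.
  apply: (inj_card_onto (reached_inj us_distinct (eqlxx _))).
  by rewrite card_finset !card_ord.
by exists i.
Qed.

Lemma every_set_reachable (S : {set 'I_n}) :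
  exists u, nfa_reach N (nfa_init N) u = S.
Proof. by have [i ->] := reached_onto S; exists (nth [::] us i). Qed.

Lemma accept_from_inj (S S' : {set 'I_n}) :
  eql (accept_from N S) (accept_from N S') -> S = S'.
Proof.
have [i ->] := reached_onto S; have [j ->] := reached_onto S'.
by move=> /(reached_separate us_distinct (eqlxx _)) ->.
Qed.

Lemma accept_from_order (S S' : {set 'I_n}) :
  subl (accept_from N S) (accept_from N S') <-> S \subset S'.
Proof.
split; last exact: accept_from_mono.
move=> sub; apply/setUidPr/accept_from_inj => w.
split=> [/accept_from_setU[/sub | ] // | hw]; apply/accept_from_setU; by right.
Qed.

Lemma LQ_accept_from (K : lang A) :
  LQ (nfa_lang N) K <-> exists S, eql K (accept_from N S).
Proof.
split=> [[s hK] | [S hK]].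
  by eexists; apply: eql_trans hK (lderiv_union_accepted N s).
have [u hu] := every_set_reachable S; exists [:: u] => w; split.
  by move=> /hK h; exists 0 => //=; rewrite nfa_lang_accept_from accept_from_cat hu.
by move=> [[|i] //= _]; rewrite nfa_lang_accept_from accept_from_cat hu => /hK.
Qed.

Lemma LQ_boolean_algebra : boolean_algebra (LQ (nfa_lang N)).
Proof. exact: powerset_image_boolean_algebra LQ_accept_from accept_from_order. Qed.

(* Each state q accepts u^{-1}L for a word u reaching exactly {q}. *)
Lemma state_lang_two_sided (q : 'I_n) :
  exists u, eql (state_lang N q) (tderiv u [::] (nfa_lang N)).
Proof.
have [u hu] := every_set_reachable [set q]; exists u => w.
by rewrite /tderiv cats0 /nfa_lang reach_cat hu.
Qed.

Lemma N_syntactic : syn_nfa N (nfa_lang N).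
Proof.
move=> q; have [u hu] := state_lang_two_sided q.
by apply: gba_ext (eql_sym hu); apply: gba_gen; exists u, [::].
Qed.

End MaximalNfa.

Theorem mainTheorem19 (A : finType) (n : nat) (N : nfa A n) :
  num_lderivs (nfa_lang N) (2 ^ n) ->
  boolean_algebra (LQ (nfa_lang N)) /\
  is_ns (nfa_lang N) n /\ is_nsyn (nfa_lang N) n.
Proof.
move=> hL; have [us [_ [us_distinct _]]] := hL.
have lower_bound m (M : nfa A m) : accepts_lang M (nfa_lang N) -> n <= m.
  exact: states_lower_bound hL.
split; first exact: LQ_boolean_algebra us_distinct.
split; first by split; [exists N | exact: lower_bound].
split; first by exists N; split; [ | exact: N_syntactic us_distinct].
by move=> m M hM _; apply: lower_bound.
Qed.
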